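(* The noncommutative Poisson brackets $[xx^*,x^*]+[yx^*,y^*]$ and $[yy^*,yxx^*+y^2y^*]$ on $\mathbb{C}\langle x,y\rangle$ induce generically nondegenerate Poisson structures $\Psi(\cdot)$ on $V=\mathrm{Mat}_{k\times k}(\mathbb{C})\oplus\mathrm{Mat}_{k\times k}(\mathbb{C})$, with points $(X,Y)$. The corresponding symplectic forms are: (i) $\mathrm{tr}\,dY\wedge d(XY^{-1})$ for $[xx^*,x^*]+[yx^*,y^*]$; (ii) $\mathrm{tr}\,d(YX)^{-1}\wedge dX$ for $[yy^*,yxx^*+y^2y^*]$.
   Context: $\mathbb{C}\langle x,y\rangle$ is the path algebra of the quiver $Q$ with one vertex and two loops $x,y$; $\mathbb{C}\bar Q=\mathbb{C}\langle x,y,x^*,y^*\rangle$, graded by the number of starred letters. $\mathcal{V}Q$ is the quotient of $\mathbb{C}\bar Q$ by the span of $PR-(-1)^{pr}RP$ for $P,R$ homogeneous of degrees $p,r$; $[u,v]=uv-vu$. $\mathrm{Rep}(Q,k)=V$, with the point $(X,Y)$ assigning $X$ to $x$ and $Y$ to $y$. Cotangent vectors at $(X,Y)$ are pairs $(A,B)$ of $k\times k$ matrices paired with tangent vectors $(U,W)$ by $\mathrm{tr}(AU+BW)$. For a monomial $P=P_1a_1^*P_2\cdots P_ra_r^*P_{r+1}$ ($P_i\in\mathbb{C}\langle x,y\rangle$ monomials, $a_i\in\{x,y\}$), $\Psi(P)$ is the $r$-vector field on $V$ obtained by restricting to alternating tensors the form $(C^1,\dots,C^r)\mapsto\mathrm{tr}\big(P_1(X,Y)C^1_{a_1}P_2(X,Y)\cdots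 C^r_{a_r}P_{r+1}(X,Y)\big)$, where $C^j_x=A^j$, $C^j_y=B^j$ for the covector $C^j=(A^j,B^j)$; $\Psi$ extends linearly and descends to $\mathcal{V}Q$. A generically nondegenerate Poisson bivector determines, on its nondegeneracy locus, a symplectic form (its inverse). *)

(* The field C is modelled as R[i] = complex R for an
   arbitrary R : realType (every realType is isomorphic to the reals). *)
From HB Require Import structures.
From mathcomp Require Import all_boot all_algebra.
From mathcomp Require Import reals.
From mathcomp.real_closed Require Import complex.
Set Implicit Arguments.
Unset Strict Implicit.
Unset Printing Implicit Defensive.
Import GRing.Theory.
Local Open Scope ring_scope.

Inductive letter := lx | ly | lxs | lys.

(* Noncommutative polynomials in C<x,y,x*,y*>: formal finite sums of
   (coefficient, monomial).  Psi is linear and descends to VQ, so working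
   with representatives is harmless. *)
Definition ncpoly (R : realType) := seq (R[i] * seq letter).

Section NC.
Variable R : realType.
Local Notation C := R[i].

Definition ncvar (l : letter) : ncpoly R := [:: (1, [:: l])].
Definition ncadd (p q : ncpoly R) : ncpoly R := p ++ q.
Definition ncopp (p : ncpoly R) : ncpoly R := [seq (- m.1, m.2) | m <- p].
Definition ncmul (p q : ncpoly R) : ncpoly R :=
  [seq (a.1 * b.1, a.2 ++ b.2) | a <- p, b <- q].
Definition nccomm (p q : ncpoly R) : ncpoly R :=
  ncadd (ncmul p q) (ncopp (ncmul q p)).

Variable k : nat.
Local Notation M := 'M[C]_k.

(* Cotangent vectors (A,B) and tangent vectors (U,W) at (X,Y) are pairs of
   k x k matrices, paired by tr(AU + BW). *)
Definition pairing (c : M * M) (t : M * M) : C :=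
  \tr (c.1 *m t.1) + \tr (c.2 *m t.2).

(* Evaluate a monomial P_1 a_1^* P_2 ... a_r^* P_{r+1} at (X,Y) on the
   covectors C^1,...,C^r : the i-th starred letter a_i^* is replaced by
   C^i_{a_i}.  A mismatch between r and the number of covectors gives 0. *)
Fixpoint evword (X Y : M) (w : seq letter) (cs : seq (M * M)) : M :=
  match w with
  | [::] => if cs is [::] then 1%:M else 0
  | lx :: w' => X *m evword X Y w' cs
  | ly :: w' => Y *m evword X Y w' cs
  | lxs :: w' => if cs is c :: cs' then c.1 *m evword X Y w' cs' else 0
  | lys :: w' => if cs is c :: cs' then c.2 *m evword X Y w' cs' else 0
  end.

Definition psiform (P : ncpoly R) (X Y : M) (cs : seq (M * M)) : C :=
  \sum_(m <- P) m.1 * \tr (evword X Y m.2 cs).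

(* Psi(P) for P of degree 2: restriction of the bilinear form to alternating
   tensors, i.e. its alternation (1/2)(f(a,b) - f(b,a)). *)
Definition Psi2 (P : ncpoly R) (X Y : M) (a b : M * M) : C :=
  (psiform P X Y [:: a; b] - psiform P X Y [:: b; a]) / 2%:R.

(* The 2-form tr dF /\ dG on tangent vectors, given the differentials
   dF, dG (tangent vector |-> matrix) at the point. *)
Definition trwedge (dF dG : M * M -> M) (u v : M * M) : C :=
  \tr (dF u *m dG v) - \tr (dF v *m dG u).

Definition bivector_nondegenerate (pi : M * M -> M * M -> C) : Prop :=
  forall a, (forall b, pi a b = 0) -> a = 0.

(* omega is the inverse of pi: omega^flat o pi^sharp = id, where
   pi^sharp a is the tangent vector u with <b,u> = pi(a,b) for all b. *)
Definition inverse_form (pi : M * M -> M * M -> C)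
    (omega : M * M -> M * M -> C) : Prop :=
  forall (a u : M * M), (forall b, pairing b u = pi a b) ->
    forall v, omega u v = pairing a v.

Definition dXf (t : M * M) : M := t.1.
Definition dYf (t : M * M) : M := t.2.
Definition d_XYinv (X Y : M) (t : M * M) : M :=
  t.1 *m invmx Y - X *m invmx Y *m t.2 *m invmx Y.
Definition d_YXinv (X Y : M) (t : M * M) : M :=
  - (invmx (Y *m X) *m (t.2 *m X + Y *m t.1) *m invmx (Y *m X)).

End NC.

Arguments ncvar {R}.

Definition bracket1 (R : realType) : ncpoly R :=
  ncadd (nccomm (ncmul (ncvar lx) (ncvar lxs)) (ncvar lxs))
        (nccomm (ncmul (ncvar ly) (ncvar lxs)) (ncvar lys)).

Definition bracket2 (R : realType) : ncpoly R :=
  nccomm (ncmul (ncvar ly) (ncvar lys))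
         (ncadd (ncmul (ncmul (ncvar ly) (ncvar lx)) (ncvar lxs))
                (ncmul (ncmul (ncvar ly) (ncvar ly)) (ncvar lys))).

(* Both brackets give bivectors of the form pi(a, b) = <b, pi#(a)> for an
   explicit map pi# from covectors to tangent vectors (cyclicity of the
   trace moves the second covector to the front).  The claimed 2-form omega
   satisfies omega(pi# a, v) = <a, v>, i.e. it is a left inverse of pi#;
   since the trace pairing is nondegenerate, this yields at once that pi is
   nondegenerate and that omega is its inverse. *)
From mathcomp Require Import all_boot all_algebra.
From mathcomp Require Import reals.
From mathcomp.real_closed Require Import complex.
From mathcomp Require Import ring.
Set Implicit Arguments.
Unset Strict Implicit.
Unset Printing Implicit Defensive.
Import GRing.Theory.
Local Open Scope ring_scope.

Lemma mxtrace_delta_mulmx (F : comNzRingType) m n (A : 'M[F]_(m, n)) i j :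
  \tr (delta_mx j i *m A) = A i j.
Proof.
rewrite /mxtrace (bigD1 j) //= big1 ?addr0.
  rewrite mxE (bigD1 i) //= big1 ?addr0; first by rewrite mxE !eqxx mul1r.
  by move=> l /negbTE li; rewrite mxE li andbF mul0r.
by move=> l /negbTE lj; rewrite mxE big1 // => p _; rewrite mxE lj mul0r.
Qed.

Section Pairing.
Variables (R : realType) (k : nat).
Local Notation M := 'M[R[i]]_k.

Lemma pairing_inj (u v : M * M) :
  (forall b, pairing b u = pairing b v) -> u = v.
Proof.
case: u v => [U W] [U' W'] eq_uv; congr pair; apply/matrixP => i j.
  have := eq_uv (delta_mx j i, 0).
  by rewrite /pairing /= !mul0mx !mxtrace0 !addr0 !mxtrace_delta_mulmx.
have := eq_uv (0, delta_mx j i).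
by rewrite /pairing /= !mul0mx !mxtrace0 !add0r !mxtrace_delta_mulmx.
Qed.

Lemma pairingC (a v : M * M) : pairing a v = pairing v a.
Proof. by rewrite /pairing mxtrace_mulC [\tr (a.2 *m _)]mxtrace_mulC. Qed.

Lemma pairing0 (b : M * M) : pairing b 0 = 0.
Proof. by rewrite /pairing /= !mulmx0 mxtrace0 addr0. Qed.

Lemma nondegenerate_inverse_of_sharp
    (pi omega : M * M -> M * M -> R[i]) (sharp : M * M -> M * M) :
  (forall a b, pi a b = pairing b (sharp a)) ->
  (forall a v, omega (sharp a) v = pairing a v) ->
  sharp 0 = 0 ->
  bivector_nondegenerate pi /\ inverse_form pi omega.
Proof.
move=> pi_sharp omega_sharp sharp0; split=> [a pi_a0 | a u pi_u v].
  have sharp_a0 : sharp a = 0.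
    by apply: pairing_inj => b; rewrite -pi_sharp pi_a0 pairing0.
  apply: pairing_inj => v; rewrite pairing0 pairingC -omega_sharp sharp_a0.
  by rewrite -[X in omega X]sharp0 omega_sharp pairingC pairing0.
have -> : u = sharp a by apply: pairing_inj => b; rewrite pi_u pi_sharp.
exact: omega_sharp.
Qed.

End Pairing.

Ltac rotate_trL := rewrite mxtrace_mulC !mulmxA.
Ltac rotate_trR := rewrite [RHS]mxtrace_mulC !mulmxA.

Section Bracket1.
Variables (R : realType) (k : nat) (X Y : 'M[R[i]]_k).

Definition sharp1 (a : 'M[R[i]]_k * 'M[R[i]]_k) :=
  (X *m a.1 - a.1 *m X - a.2 *m Y, Y *m a.1).

Lemma Psi2_bracket1 a b : Psi2 (bracket1 R) X Y a b = pairing b (sharp1 a).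
Proof.
case: a b => [A1 B1] [A2 B2].
rewrite /Psi2 /psiform /bracket1 /= !big_cons !big_nil /= !mulmx1 !mulmxA.
rewrite /pairing /= !mulmxBr !(raddfB mxtrace) !mulmxA.
have -> : \tr (X *m A1 *m A2) = \tr (A2 *m X *m A1) by rotate_trL.
have -> : \tr (A1 *m X *m A2) = \tr (A2 *m A1 *m X) by rotate_trL.
have -> : \tr (Y *m A1 *m B2) = \tr (B2 *m Y *m A1) by rotate_trL.
have -> : \tr (B1 *m Y *m A2) = \tr (A2 *m B1 *m Y) by rotate_trL.
have -> : \tr (X *m A2 *m A1) = \tr (A2 *m A1 *m X) by rotate_trR.
have -> : \tr (Y *m A2 *m B1) = \tr (A2 *m B1 *m Y) by rotate_trR.
by field.
Qed.

Lemma trwedge_sharp1 a v : Y \in unitmx ->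
  trwedge (@dYf R k) (d_XYinv X Y) (sharp1 a) v = pairing a v.
Proof.
move=> uY; case: a v => [A1 B1] [V1 V2].
rewrite /trwedge /dYf /d_XYinv /pairing /=.
set Yi := invmx Y.
rewrite !mulmxBl !mulmxA (mulmxK uY) (mulmxKV uY).
rewrite !mulmxBr !(raddfB mxtrace) /= !mulmxA.
have -> : \tr (Y *m A1 *m V1 *m Yi) = \tr (A1 *m V1).
  by rewrite mxtrace_mulC !mulmxA mulVmx // mul1mx.
have -> : \tr (Y *m A1 *m X *m Yi *m V2 *m Yi) = \tr (A1 *m X *m Yi *m V2).
  by rewrite mxtrace_mulC !mulmxA mulVmx // mul1mx.
have -> : \tr (V2 *m A1 *m X *m Yi) = \tr (A1 *m X *m Yi *m V2) by rotate_trR.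
have -> : \tr (V2 *m B1) = \tr (B1 *m V2) by rewrite mxtrace_mulC.
by ring.
Qed.

End Bracket1.

Section Conjugation.
Variables (F : comUnitRingType) (n : nat) (P : 'M[F]_n).
Hypothesis P_unit : P \in unitmx.

Lemma invmx_conj_mx (A B : 'M[F]_n) :
  invmx P *m (- (P *m A *m P) + B *m P) *m invmx P = - A + invmx P *m B.
Proof.
rewrite mulmxDr mulmxN mulmxDl mulNmx !mulmxA mulVmx // mul1mx.
by rewrite !mulmxK.
Qed.

Lemma mxtrace_invmx_conj (S W : 'M[F]_n) :
  \tr (invmx P *m S *m invmx P *m (W *m P)) = \tr (S *m invmx P *m W).
Proof. by rewrite mulmxA mxtrace_mulC !mulmxA mulmxV // mul1mx. Qed.

End Conjugation.

Section Bracket2.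
Variables (R : realType) (k : nat) (X Y : 'M[R[i]]_k).

Definition sharp2 (a : 'M[R[i]]_k * 'M[R[i]]_k) :=
  (Y *m a.2 *m Y *m X,
   - (Y *m X *m a.1 *m Y) + Y *m a.2 *m Y *m Y - Y *m Y *m a.2 *m Y).

Lemma Psi2_bracket2 a b : Psi2 (bracket2 R) X Y a b = pairing b (sharp2 a).
Proof.
case: a b => [A1 B1] [A2 B2].
rewrite /Psi2 /psiform /bracket2 /= !big_cons !big_nil /= !mulmx1 !mulmxA.
rewrite /pairing /= ?mulmxDr ?mulmxBr ?mulmxN ?raddfD ?(raddfB mxtrace).
rewrite ?raddfN /= !mulmxA.
have -> : \tr (Y *m B1 *m Y *m X *m A2) = \tr (A2 *m Y *m B1 *m Y *m X).
  by rotate_trL.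
have -> : \tr (Y *m B1 *m Y *m Y *m B2) = \tr (B2 *m Y *m B1 *m Y *m Y).
  by rotate_trL.
have -> : \tr (Y *m X *m A1 *m Y *m B2) = \tr (B2 *m Y *m X *m A1 *m Y).
  by rotate_trL.
have -> : \tr (Y *m Y *m B1 *m Y *m B2) = \tr (B2 *m Y *m Y *m B1 *m Y).
  by rotate_trL.
have -> : \tr (Y *m B2 *m Y *m X *m A1) = \tr (B2 *m Y *m X *m A1 *m Y).
  by rotate_trR.
have -> : \tr (Y *m B2 *m Y *m Y *m B1) = \tr (B2 *m Y *m Y *m B1 *m Y).
  by rotate_trR.
have -> : \tr (Y *m X *m A2 *m Y *m B1) = \tr (A2 *m Y *m B1 *m Y *m X).
  by rotate_trR; rotate_trR.
have -> : \tr (Y *m Y *m B2 *m Y *m B1) = \tr (B2 *m Y *m B1 *m Y *m Y).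
  by rotate_trR; rotate_trR.
by field.
Qed.

Lemma trwedge_sharp2 a v : (Y *m X) \in unitmx ->
  trwedge (d_YXinv X Y) (@dXf R k) (sharp2 a) v = pairing a v.
Proof.
move=> uYX; case: a v => [A1 B1] [V1 V2].
rewrite /trwedge /dXf /pairing /d_YXinv /=.
have X_invYX_Y : X *m (invmx (Y *m X) *m Y) = 1%:M.
  by apply: mulmx1C; rewrite -mulmxA mulVmx.
have dYX_sharp2 :
    (- (Y *m X *m A1 *m Y) + Y *m B1 *m Y *m Y - Y *m Y *m B1 *m Y) *m X
      + Y *m (Y *m B1 *m Y *m X)
    = - (Y *m X *m A1 *m (Y *m X)) + Y *m B1 *m Y *m (Y *m X).
  by rewrite !mulmxDl !mulNmx !mulmxA subrK.
rewrite dYX_sharp2 invmx_conj_mx // mulNmx (raddfN mxtrace) /=.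
rewrite -[Y *m B1 *m Y *m X]mulmxA mulNmx (raddfN mxtrace) /=.
rewrite mxtrace_invmx_conj //.
rewrite !mulmxDl !mulNmx !(raddfD mxtrace) /= !(raddfN mxtrace) /= !mulmxA.
have -> : \tr (V2 *m X *m invmx (Y *m X) *m Y *m B1) = \tr (B1 *m V2).
  by rewrite -(mulmxA (V2 *m X)) -(mulmxA V2) X_invYX_Y mulmx1 mxtrace_mulC.
have -> : \tr (Y *m V1 *m invmx (Y *m X) *m Y *m B1)
          = \tr (invmx (Y *m X) *m Y *m B1 *m Y *m V1).
  by rotate_trR; rotate_trR.
by ring.
Qed.

End Bracket2.

Theorem mainTheorem8 (R : realType) (k : nat) :
  (forall X Y : 'M[R[i]]_k, Y \in unitmx ->
     bivector_nondegenerate (Psi2 (bracket1 R) X Y) /\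
     inverse_form (Psi2 (bracket1 R) X Y)
                  (trwedge (@dYf R k) (d_XYinv X Y))) /\
  (forall X Y : 'M[R[i]]_k, (Y *m X) \in unitmx ->
     bivector_nondegenerate (Psi2 (bracket2 R) X Y) /\
     inverse_form (Psi2 (bracket2 R) X Y)
                  (trwedge (d_YXinv X Y) (@dXf R k))).
Proof.
split=> X Y uY.
  apply: (@nondegenerate_inverse_of_sharp R k _ _ (sharp1 X Y)).
  - exact: Psi2_bracket1.
  - by move=> a v; exact: trwedge_sharp1.
  - by rewrite /sharp1 /= !mulmx0 !mul0mx !subrr.
apply: (@nondegenerate_inverse_of_sharp R k _ _ (sharp2 X Y)).
- exact: Psi2_bracket2.
- by move=> a v; exact: trwedge_sharp2.
- by rewrite /sharp2 /= !mulmx0 !mul0mx oppr0 !addr0.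
Qed.
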